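(* Fix $\boldsymbol{x}\in\mathcal{R}_r$ and consider the second-order cone program, in the variable $(\boldsymbol{u},d,t)\in\mathbb{R}^m\times\mathbb{R}\times\mathbb{R}$, $$\min\ t\quad\text{s.t.}\quad \Big\|E\begin{bmatrix}\boldsymbol{u}\\ d\end{bmatrix}\Big\|_2\le t,\qquad \hat{\dot V}(\boldsymbol{x},\boldsymbol{u})+m_r^V+\beta_r\sigma_r^V+\lambda V(\boldsymbol{x})\le d,\qquad \|A_r^h(\boldsymbol{x})\boldsymbol{u}+\boldsymbol{b}_r^h(\boldsymbol{x})\|_2\le \boldsymbol{c}_r^h(\boldsymbol{x})\boldsymbol{u}+d_r^h(\boldsymbol{x}),$$ with $E=\operatorname{diag}(1,\dots,1,\sqrt\rho)$. If this program is feasible, then $$1-\frac{1}{\beta_r^2}\boldsymbol{\phi}_r\,\Sigma_r^h(\boldsymbol{x})^{-1}\boldsymbol{\phi}_r^T\le 0,\qquad\text{where } \boldsymbol{\phi}_r=\begin{bmatrix}\varphi_r^{hf}+\mu_r^{h1} & \boldsymbol{c}_r^h(\boldsymbol{x})\end{bmatrix}\in\mathbb{R}^{1\times(m+1)}.$$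
   Context: Setting: switching system $\dot{\boldsymbol{x}}=\sum_{r=1}^R\delta_r(f_r(\boldsymbol{x})+g_r(\boldsymbol{x})\boldsymbol{u})$, $\boldsymbol{x}\in\mathcal{X}\subset\mathbb{R}^n$, $\boldsymbol{u}\in\mathbb{R}^m$, with pairwise disjoint regions $\mathcal{R}_r$ covering $\mathcal{X}$ and $\delta_r$ the indicator of $\mathcal{R}_r$; nominal model $\dot{\boldsymbol{x}}=\hat f(\boldsymbol{x})+\hat g(\boldsymbol{x})\boldsymbol{u}$; continuously differentiable CLF $V$ and CBF $h$ with nominal derivative $\hat{\dot V}=L_{\hat f}V+L_{\hat g}V\boldsymbol{u}$; constants $\rho>0$, $\lambda>0$, $\beta_r>0$. Write $\boldsymbol{y}=[1,\boldsymbol{u}^T]^T$. For region $r$, Gaussian-process posteriors (zero prior mean, kernel $\boldsymbol{y}^T\operatorname{diag}(k_r^1(\boldsymbol{x},\boldsymbol{x}'),\dots,k_r^{m+1}(\boldsymbol{x},\boldsymbol{x}'))\boldsymbol{y}'$ with positive-definite base kernels, noise variance $\sigma_n^2>0$) give for the CLF residual a mean $m_r^V=\boldsymbol{\mu}_r^V(\boldsymbol{x})\boldsymbol{y}$ and standard deviation $\sigma_r^V=\sqrt{\boldsymbol{y}^T\Sigma_r^V(\boldsymbol{x})\boldsymbol{y}}$, and for the CBF residual a mean $\boldsymbol{\mu}_r^h(\boldsymbol{x})\boldsymbol{y}$ ($\boldsymbol{\mu}_r^h\in\mathbb{R}^{1\times(m+1)}$) and standard deviation $\sqrt{\boldsymbol{y}^T\Sigma_r^h(\boldsymbol{x})\boldsymbol{y}}$,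 where the posterior covariance matrix $\Sigma_r^h(\boldsymbol{x})=\Lambda_r(\boldsymbol{x},\boldsymbol{x})-\bar K_r(K_r+\sigma_n^2I)^{-1}\bar K_r^T$ is taken (as in the paper) to be symmetric positive definite. Write $\mu_r^{h1}$ for the first entry and $\boldsymbol{\mu}_r^{hm}$ for the last $m$ entries of $\boldsymbol{\mu}_r^h$. Let $L_r$ satisfy $L_r^TL_r=\Sigma_r^h(\boldsymbol{x})$, with first column $\boldsymbol{l}_r^1$ and last $m$ columns $L_r^m$. Let $\boldsymbol{\varphi}_r^h=[L_{f_r}h-L_{\hat f}h,\ L_{g_r}h-L_{\hat g}h]\in\mathbb{R}^{1\times(m+1)}$ with first entry $\varphi_r^{hf}$ and last $m$ entries $\boldsymbol{\varphi}_r^{hg}$. Define $A_r^h=\beta_rL_r^m$, $\boldsymbol{b}_r^h=\beta_r\boldsymbol{l}_r^1$, $\boldsymbol{c}_r^h=\boldsymbol{\varphi}_r^{hg}+\boldsymbol{\mu}_r^{hm}$, $d_r^h=\varphi_r^{hf}+\mu_r^{h1}$. *)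

From HB Require Import structures.
From mathcomp Require Import all_boot all_order all_algebra.
Set Implicit Arguments. Unset Strict Implicit. Unset Printing Implicit Defensive.
Import Order.TTheory GRing.Theory Num.Theory.
Local Open Scope ring_scope.

Definition norm2 {R : rcfType} {k : nat} (v : 'cV[R]_k) : R :=
  Num.sqrt (\sum_(i < k) v i 0 ^+ 2).

Definition yvec {R : rcfType} {m : nat} (u : 'cV[R]_m) : 'cV[R]_(1 + m) :=
  col_mx 1 u.

Definition Emat {R : rcfType} (m : nat) (rho : R) : 'M[R]_(m + 1) :=
  diag_mx (row_mx (const_mx 1) (Num.sqrt rho)%:M).

(* A_r^h = beta L^m, b_r^h = beta l^1, c_r^h = phi^hg + mu^hm,
   d_r^h = phi^hf + mu^h1 *)
Definition Ah {R : rcfType} {k m : nat} (beta : R) (L : 'M[R]_(k, 1 + m))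
  : 'M[R]_(k, m) := beta *: rsubmx L.
Definition bh {R : rcfType} {k m : nat} (beta : R) (L : 'M[R]_(k, 1 + m))
  : 'cV[R]_k := beta *: lsubmx L.
Definition ch {R : rcfType} {m : nat} (phih muh : 'rV[R]_(1 + m)) : 'rV[R]_m :=
  rsubmx phih + rsubmx muh.
Definition dh {R : rcfType} {m : nat} (phih muh : 'rV[R]_(1 + m)) : R :=
  (lsubmx phih) 0 0 + (lsubmx muh) 0 0.

Definition phivec {R : rcfType} {m : nat} (phih muh : 'rV[R]_(1 + m))
  : 'rV[R]_(1 + m) :=
  row_mx (((lsubmx phih) 0 0 + (lsubmx muh) 0 0)%:M) (ch phih muh).

(* Feasibility of the SOCP at the fixed state x.
   LfV = L_{\hat f}V(x), LgV = L_{\hat g}V(x), muV = mu_r^V(x),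
   SigV = Sigma_r^V(x), Vx = V(x). *)
Definition socp_feasible {R : rcfType} {k m : nat} (rho lam beta : R)
  (LfV : R) (LgV : 'rV[R]_m) (muV : 'rV[R]_(1 + m)) (SigV : 'M[R]_(1 + m))
  (Vx : R) (L : 'M[R]_(k, 1 + m)) (phih muh : 'rV[R]_(1 + m)) : Prop :=
  exists (u : 'cV[R]_m) (d t : R),
    [/\ norm2 (Emat m rho *m col_mx u d%:M) <= t,
        LfV + (LgV *m u) 0 0 + (muV *m yvec u) 0 0
          + beta * Num.sqrt (((yvec u)^T *m SigV *m yvec u) 0 0)
          + lam * Vx <= d
      & norm2 (Ah beta L *m u + bh beta L) <= (ch phih muh *m u) 0 0 + dh phih muh].

(** The third cone constraint says that the [Sigma]-norm of [y = (1, u)]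
   scaled by [beta] is at most [phi y].  By Cauchy-Schwarz for the inner
   product defined by [Sigma], [(phi y)^2 <= (phi Sigma^-1 phi^T) (y^T Sigma y)],
   and since [y <> 0] the positive factor [y^T Sigma y] can be cancelled,
   leaving [beta^2 <= phi Sigma^-1 phi^T]. *)
From HB Require Import structures.
From mathcomp Require Import all_boot all_order all_algebra.
From mathcomp Require Import ring.
Import Order.TTheory GRing.Theory Num.Theory.
Local Open Scope ring_scope.

Definition bform {R : numDomainType} {n : nat} (S : 'M[R]_n) (v w : 'cV[R]_n) : R :=
  (v^T *m S *m w) 0 0.

Definition posdef {R : numDomainType} {n : nat} (S : 'M[R]_n) : Prop :=
  forall v : 'cV[R]_n, v != 0 -> 0 < bform S v v.

Section BilinearForm.
Context {R : numDomainType} {n : nat} {S : 'M[R]_n}.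

Lemma bform_sym v w : S^T = S -> bform S v w = bform S w v.
Proof.
move=> symS; rewrite /bform.
have -> : (v^T *m S *m w) 0 0 = (v^T *m S *m w)^T 0 0 by rewrite [RHS]mxE.
by rewrite !trmx_mul trmxK symS mulmxA.
Qed.

Lemma bformZ a v w : bform (a *: S) v w = a * bform S v w.
Proof. by rewrite /bform -scalemxAr -scalemxAl [(_ *: _ : 'M[R]_1) 0 0]mxE. Qed.

Lemma bform_lincomb a c v w :
  bform S (a *: v + c *: w) (a *: v + c *: w) =
  a ^+ 2 * bform S v v + a * c * (bform S v w + bform S w v)
    + c ^+ 2 * bform S w w.
Proof.
rewrite /bform [(_ + _)^T]linearD /= !linearZ /= !mulmxDl !mulmxDr.
rewrite -!scalemxAl -!scalemxAr !scalerA.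
by rewrite ![(_ + _ : 'M[R]_1) 0 0]mxE ![(_ *: _ : 'M[R]_1) 0 0]mxE; ring.
Qed.

Lemma posdef_bform_ge0 v : posdef S -> 0 <= bform S v v.
Proof.
move=> posS; have [->|nz_v] := eqVneq v 0; last exact/ltW/posS.
by rewrite /bform mulmx0 mxE.
Qed.

Lemma bform_cauchy_schwarz v w : S^T = S -> posdef S ->
  bform S w v ^+ 2 <= bform S w w * bform S v v.
Proof.
move=> symS posS; have [->|nz_w] := eqVneq w 0.
  by rewrite /bform trmx0 !mul0mx !mxE expr0n mul0r.
(* the form is nonnegative at the witness [q(w,w) v - q(w,v) w] *)
have := posdef_bform_ge0 (bform S w w *: v + (- bform S w v) *: w) posS.
rewrite bform_lincomb (bform_sym v w symS).
have -> : bform S w w ^+ 2 * bform S v v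
          + bform S w w * - bform S w v * (bform S w v + bform S w v)
          + (- bform S w v) ^+ 2 * bform S w w
        = bform S w w * (bform S w w * bform S v v - bform S w v ^+ 2) by ring.
by rewrite pmulr_rge0 ?posS // subr_ge0.
Qed.

End BilinearForm.

Section DualForm.
Context {R : numFieldType} {n : nat} {S : 'M[R]_n}.
Hypotheses (symS : S^T = S) (posS : posdef S).

Lemma posdef_unitmx : S \in unitmx.
Proof.
rewrite unitmxE unitfE; apply/negP => /det0P [v nz_v vS0].
have /posS : v^T != 0 by rewrite trmx_eq0.
by rewrite /bform trmxK vS0 mul0mx mxE ltxx.
Qed.

Lemma row_mul_sqr_le_dual_form (phi : 'rV[R]_n) (v : 'cV[R]_n) :
  ((phi *m v) 0 0) ^+ 2 <= (phi *m invmx S *m phi^T) 0 0 * bform S v v.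
Proof.
pose w := invmx S *m phi^T.
have phiE : phi = w^T *m S.
  by rewrite /w trmx_mul trmx_inv symS trmxK mulmxKV // posdef_unitmx.
have -> : (phi *m invmx S *m phi^T) 0 0 = bform S w w.
  by rewrite /bform -phiE /w mulmxA.
by rewrite [in X in (X 0 0)]phiE; exact: bform_cauchy_schwarz.
Qed.

End DualForm.

Lemma norm2_mul_sqr {R : rcfType} {k n : nat} (A : 'M[R]_(k, n)) (v : 'cV[R]_n) :
  norm2 (A *m v) ^+ 2 = bform (A^T *m A) v v.
Proof.
rewrite /norm2 sqr_sqrtr; last by apply: sumr_ge0 => i _; exact: sqr_ge0.
rewrite /bform (_ : v^T *m _ *m v = (A *m v)^T *m (A *m v)); last first.
  by rewrite trmx_mul !mulmxA.
by rewrite mxE; apply: eq_bigr => i _; rewrite !mxE.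
Qed.

Lemma yvec_neq0 {R : rcfType} {m : nat} (u : 'cV[R]_m) : yvec u != 0.
Proof. by rewrite /yvec col_mx_eq0 negb_and oner_eq0. Qed.

Section ConeConstraint.
Variables (R : rcfType) (k m : nat) (beta : R) (L : 'M[R]_(k, 1 + m)).
Variables (phih muh : 'rV[R]_(1 + m)) (u : 'cV[R]_m).

Lemma Ah_mul_add_bh : Ah beta L *m u + bh beta L = (beta *: L) *m yvec u.
Proof.
rewrite /Ah /bh /yvec -{3}(hsubmxK L) scale_row_mx mul_row_col mulmx1.
by rewrite addrC -!scalemxAl.
Qed.

Lemma ch_mul_add_dh :
  (ch phih muh *m u) 0 0 + dh phih muh = (phivec phih muh *m yvec u) 0 0.
Proof.
rewrite /phivec /yvec mul_row_col mulmx1 [RHS]mxE addrC.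
by congr (_ + _); rewrite mxE.
Qed.

End ConeConstraint.

Theorem corollary2 (R : rcfType) (k m : nat) (rho lam beta : R)
  (LfV : R) (LgV : 'rV[R]_m) (muV : 'rV[R]_(1 + m)) (SigV : 'M[R]_(1 + m))
  (Vx : R) (Sigh : 'M[R]_(1 + m)) (L : 'M[R]_(k, 1 + m))
  (phih muh : 'rV[R]_(1 + m)) :
  0 < rho -> 0 < lam -> 0 < beta ->
  Sigh^T = Sigh ->
  (forall v : 'cV[R]_(1 + m), v != 0 -> 0 < (v^T *m Sigh *m v) 0 0) ->
  L^T *m L = Sigh ->
  socp_feasible rho lam beta LfV LgV muV SigV Vx L phih muh ->
  1 - beta^-2 * (phivec phih muh *m invmx Sigh *m (phivec phih muh)^T) 0 0 <= 0.
Proof.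
move=> _ _ beta_gt0 symS posS LTL [u [_ [_ [_ _]]]].
rewrite Ah_mul_add_bh ch_mul_add_dh => cone.
set y := yvec u; set phi := phivec phih muh.
have qy_gt0 : 0 < bform Sigh y y := posS y (yvec_neq0 u).
have cone_sqr : beta ^+ 2 * bform Sigh y y <= ((phi *m y) 0 0) ^+ 2.
  have -> : beta ^+ 2 * bform Sigh y y = norm2 ((beta *: L) *m y) ^+ 2.
    by rewrite norm2_mul_sqr linearZ /= linearZ /= -scalemxAl scalerA LTL bformZ.
  by rewrite ler_sqr // ?nnegrE ?sqrtr_ge0 // (le_trans (sqrtr_ge0 _) cone).
have dual := row_mul_sqr_le_dual_form symS posS phi y.
have beta2_le : beta ^+ 2 <= (phi *m invmx Sigh *m phi^T) 0 0.
  by rewrite -(ler_pM2r qy_gt0); exact: le_trans cone_sqr dual.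
by rewrite subr_le0 mulrC ler_pdivlMr ?exprn_gt0 // mul1r.
Qed.
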